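(* For every $\delta\in\mathbb R$, $$\prod_{j=1}^r\Big(D_j^2-\big(\delta+\rho(\xi_1)\big)^2\Big)\, f_\delta\;=\;\prod_{j=1}^r\big(\delta+a(j-1)\big)\big(1-\delta-\iota-a(r-j)\big)\; f_{\delta-2},$$ where $\rho(\xi_1)=\iota+b+a(r-1)$. In particular the $W$-invariant polynomial $\prod_{j}(D_j^2-(\delta+\rho(\xi_1))^2)$ in the Cherednik operators maps $f_\delta$ to a constant multiple of $f_{\delta-2}$.
   Context: Let $r\ge 1$ and $a,b,\iota>0$ be real numbers. Let $\mathfrak a=\mathbb R^r$ with orthonormal basis $\xi_1,\dots,\xi_r$, write $t=\sum_j t_j\xi_j$, and let $\varepsilon_1,\dots,\varepsilon_r$ be the dual basis. $R$ is the root system of type $BC_r$ with positive roots $2\varepsilon_j$ (multiplicity $b$), $4\varepsilon_j$ (multiplicity $\iota/2$), and $2(\varepsilon_j\pm\varepsilon_k)$, $j<k$ (multiplicity $a/2$). Its half-sum of positive roots is $\rho=\sum_j\rho_j\varepsilon_j$ with $\rho_j=\rho(\xi_j)=\iota+b+a(r-j)$. The Weyl group $W$ is the group of signed permutations of coordinates; it acts on functions by permuting/changing signs of the variables. Let $s_{ij}$ swap $t_i$ and $t_j$, let $\sigma_{ij}$ send $(t_i,t_j)\mapsto(-t_j,-t_i)$, and let $\sigma_i$ send $t_i\mapsto -t_i$ (all other coordinates fixed). The Cherednik operators acting on smooth functions on $\mathfrak a$ are $$D_j=\partial_{t_j}-a\sum_{i<j}\frac{1-s_{ij}}{1-e^{-2(t_i-t_j)}}+a\sum_{k>j}\frac{1-s_{jk}}{1-e^{-2(t_j-t_k)}}+a\sum_{k\ne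 j}\frac{1-\sigma_{jk}}{1-e^{-2(t_j+t_k)}}+2\iota\frac{1-\sigma_j}{1-e^{-4t_j}}+2b\frac{1-\sigma_j}{1-e^{-2t_j}}-\rho_j,$$ $j=1,\dots,r$; they pairwise commute, so products of them are unambiguous. For $\delta\in\mathbb R$ the canonical function is $f_\delta(t)=\prod_{j=1}^r\cosh^{\delta}t_j$. *)

From Stdlib Require Import Reals Lra Arith.
From Coquelicot Require Import Coquelicot.
Open Scope R_scope.

(* Points of a = R^r are represented as t : nat -> R; only the coordinates
   t 0, ..., t (r-1) are ever used (coordinate t_{j+1} of the paper is t j). *)
Definition pt := nat -> R.
Definition func := pt -> R.

Fixpoint rsum (n : nat) (F : nat -> R) : R :=
  match n with O => 0 | S m => rsum m F + F m end.

Fixpoint rprod (n : nat) (F : nat -> R) : R :=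
  match n with O => 1 | S m => rprod m F * F m end.

Definition upd (t : pt) (j : nat) (s : R) : pt :=
  fun k => if Nat.eqb k j then s else t k.

Definition swap (i j : nat) (t : pt) : pt :=
  fun k => if Nat.eqb k i then t j else if Nat.eqb k j then t i else t k.
Definition sigma2 (i j : nat) (t : pt) : pt :=
  fun k => if Nat.eqb k i then - t j else if Nat.eqb k j then - t i else t k.
Definition sigma1 (i : nat) (t : pt) : pt :=
  fun k => if Nat.eqb k i then - t i else t k.

(* rho_j for the 0-based index j (paper's index j+1): iota + b + a (r - (j+1)) *)
Definition rho (r : nat) (a b iota : R) (j : nat) : R :=
  iota + b + a * INR (r - 1 - j).

Definition cherednik (r : nat) (a b iota : R) (j : nat) (g : func) : func :=
  fun t =>
    Derive (fun s => g (upd t j s)) (t j)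
    - a * rsum j (fun i => (g t - g (swap i j t)) / (1 - exp (-2 * (t i - t j))))
    + a * rsum r (fun k => if Nat.ltb j k
                           then (g t - g (swap j k t)) / (1 - exp (-2 * (t j - t k)))
                           else 0)
    + a * rsum r (fun k => if Nat.eqb k j then 0
                           else (g t - g (sigma2 j k t)) / (1 - exp (-2 * (t j + t k))))
    + 2 * iota * ((g t - g (sigma1 j t)) / (1 - exp (-4 * t j)))
    + 2 * b * ((g t - g (sigma1 j t)) / (1 - exp (-2 * t j)))
    - rho r a b iota j * g t.

Definition factor_op (r : nat) (a b iota c : R) (j : nat) (g : func) : func :=
  fun t => cherednik r a b iota j (cherednik r a b iota j g) t - c ^ 2 * g t.

(* the composite  prod_{j < n} (D_j^2 - c^2)  (the D_j commute, order irrelevant) *)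
Fixpoint prod_ops (n : nat) (r : nat) (a b iota c : R) (g : func) : func :=
  match n with
  | O => g
  | S m => factor_op r a b iota c m (prod_ops m r a b iota c g)
  end.

Definition f_can (r : nat) (delta : R) : func :=
  fun t => rprod r (fun j => Rpower (cosh (t j)) delta).

(* regular points: off all root hyperplanes of BC_r (where the formula for D_j
   is literally defined; the smooth extension is by continuity) *)
Definition regular (r : nat) (t : pt) : Prop :=
  (forall j, (j < r)%nat -> t j <> 0) /\
  (forall i j, (i < r)%nat -> (j < r)%nat -> i <> j -> t i <> t j /\ t i <> - t j).

From Pilot Require Import Defs.
From Stdlib Require Import Reals Lra Lia FunctionalExtensionality.
From Coquelicot Require Import Coquelicot.
Open Scope R_scope.

(* Write [u_j = tanh t_j].  Every kernel [1 / (1 - e^{-alpha(t)})] of the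
   Cherednik operators is a rational function of the [u_j], and
   [D_j (f_delta . Q(u)) = f_delta . (T_j Q)(u)] for an explicit
   difference-differential operator [T_j] in [u].  By induction on [m], the
   first [m] factors [D_j^2 - c^2] send [f_delta] to [f_delta . Phi_m(u)], where
     [Phi_m(u) = prod_(j<m) (delta + a j)(1 + u_j)
                 . sum_k gam_(m,k) e_k(u_0 - 1, ..., u_(m-1) - 1)].
   As [Phi_m] does not involve [u_m], [T_m Phi_m = ((delta + a m)(1 + u_m) - c) Phi_m];
   a second application of [T_m] reproduces the recursion defining the
   [gam_(m+1,k)].  For [m = r] all [gam_(r,k)] with [k < r] vanish, leaving
   [prod_j (1 + u_j)(u_j - 1) = - prod_j 1 / cosh^2 t_j]. *)

Lemma rsum_ext n F G : (forall k, (k < n)%nat -> F k = G k) -> rsum n F = rsum n G.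
Proof.
  induction n as [|n IH]; intros H; simpl; [reflexivity|].
  rewrite IH, H; auto.
Qed.

Lemma rprod_ext n F G : (forall k, (k < n)%nat -> F k = G k) -> rprod n F = rprod n G.
Proof.
  induction n as [|n IH]; intros H; simpl; [reflexivity|].
  rewrite IH, H; auto.
Qed.

Lemma rsum_S n F : rsum (S n) F = rsum n F + F n.
Proof. reflexivity. Qed.

Lemma rsum_add n F G : rsum n (fun k => F k + G k) = rsum n F + rsum n G.
Proof. induction n as [|n IH]; simpl; [lra|rewrite IH; lra]. Qed.

Lemma rsum_sub n F G : rsum n (fun k => F k - G k) = rsum n F - rsum n G.
Proof. induction n as [|n IH]; simpl; [lra|rewrite IH; lra]. Qed.

Lemma rsum_scal n c F : rsum n (fun k => c * F k) = c * rsum n F.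
Proof. induction n as [|n IH]; simpl; [lra|rewrite IH; lra]. Qed.

Lemma rsum_const n c : rsum n (fun _ => c) = INR n * c.
Proof. induction n as [|n IH]; [simpl; lra|rewrite rsum_S, IH, S_INR; lra]. Qed.

Lemma rsum_eq0 n F : (forall k, (k < n)%nat -> F k = 0) -> rsum n F = 0.
Proof. intros H. rewrite (rsum_ext n F (fun _ => 0)), rsum_const by auto. lra. Qed.

Lemma rsum_Sl n F : rsum (S n) F = F O + rsum n (fun k => F (S k)).
Proof. induction n as [|n IH]; [simpl; lra|]. rewrite rsum_S, IH. simpl; lra. Qed.

Lemma rsum_comm n p (F : nat -> nat -> R) :
  rsum n (fun i => rsum p (F i)) = rsum p (fun k => rsum n (fun i => F i k)).
Proof.
  induction n as [|n IH]; simpl.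
  - symmetry; apply rsum_eq0; auto.
  - rewrite IH, <- rsum_add. reflexivity.
Qed.

Lemma rsum_restrict j n F : (j <= n)%nat ->
  rsum j F = rsum n (fun k => if Nat.ltb k j then F k else 0).
Proof.
  intros Hj. induction n as [|n IH].
  - replace j with O by lia. reflexivity.
  - destruct (Nat.eq_dec j (S n)) as [->|Hne].
    + apply rsum_ext; intros k Hk. destruct (Nat.ltb_spec k (S n)); [auto|lia].
    + rewrite rsum_S, <- IH by lia. destruct (Nat.ltb_spec n j); [lia|lra].
Qed.

Lemma rsum_piecewise m n A B : (m < n)%nat ->
  rsum n (fun k => if Nat.ltb k m then A k else if Nat.ltb m k then B else 0)
  = rsum m A + INR (n - 1 - m) * B.
Proof.
  intros Hm. induction n as [|n IH]; [lia|].
  rewrite rsum_S. destruct (Nat.eq_dec m n) as [->|Hne].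
  - rewrite (rsum_restrict n n A) by lia. replace (S n - 1 - n)%nat with O by lia.
    destruct (Nat.ltb_spec n n); [lia|]. simpl INR. rewrite Rmult_0_l, !Rplus_0_r.
    apply rsum_ext; intros k Hk. destruct (Nat.ltb_spec k n); [auto|lia].
  - rewrite IH by lia. destruct (Nat.ltb_spec n m); [lia|]. destruct (Nat.ltb_spec m n); [|lia].
    replace (S n - 1 - m)%nat with (S (n - 1 - m)) by lia. rewrite S_INR. lra.
Qed.

Lemma rprod_S n F : rprod (S n) F = rprod n F * F n.
Proof. reflexivity. Qed.

Lemma rprod_mul n F G : rprod n (fun k => F k * G k) = rprod n F * rprod n G.
Proof. induction n as [|n IH]; simpl; [lra|rewrite IH; lra]. Qed.

Lemma rprod_Sl n F : rprod (S n) F = F O * rprod n (fun k => F (S k)).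
Proof. induction n as [|n IH]; [simpl; lra|]. simpl in *. rewrite IH; lra. Qed.

Lemma rprod_rev n F : rprod n (fun j => F (n - 1 - j)%nat) = rprod n F.
Proof.
  revert F; induction n as [|n IH]; intros F; [reflexivity|].
  rewrite (rprod_Sl n F), <- (IH (fun k => F (S k))), rprod_S.
  replace (S n - 1 - n)%nat with O by lia.
  rewrite (rprod_ext n _ (fun j => F (S (n - 1 - j)))); [lra|].
  intros j Hj; f_equal; lia.
Qed.

(* [upd F i 1] is [F] with its [i]-th factor removed. *)
Lemma rprod_factor n F i : (i < n)%nat -> rprod n F = F i * rprod n (upd F i 1).
Proof.
  induction n as [|n IH]; intros Hi; [lia|]. simpl.
  destruct (Nat.eq_dec i n) as [->|Hne].
  - unfold upd at 2. rewrite Nat.eqb_refl.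
    rewrite (rprod_ext n (upd F n 1) F); [lra|].
    intros k Hk; unfold upd; destruct (Nat.eqb_spec k n); [lia|auto].
  - rewrite IH by lia. unfold upd at 3. destruct (Nat.eqb_spec n i); [lia|lra].
Qed.

Lemma rprod_eq_off2 n F G i j : (i < n)%nat -> (j < n)%nat -> i <> j ->
  (forall k, (k < n)%nat -> k <> i -> k <> j -> G k = F k) -> G i * G j = F i * F j ->
  rprod n G = rprod n F.
Proof.
  intros Hi Hj Hij Hoff Hij2.
  rewrite (rprod_factor n G i), (rprod_factor n (upd G i 1) j) by auto.
  rewrite (rprod_factor n F i), (rprod_factor n (upd F i 1) j) by auto.
  assert (Hupd : forall H : nat -> R, upd H i 1 j = H j).
  { intros H; unfold upd; destruct (Nat.eqb_spec j i); [lia|auto]. }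
  rewrite !Hupd.
  rewrite (rprod_ext n (upd (upd G i 1) j 1) (upd (upd F i 1) j 1)).
  - transitivity (G i * G j * rprod n (upd (upd F i 1) j 1)); [ring|]. rewrite Hij2; ring.
  - intros k Hk; unfold upd. destruct (Nat.eqb_spec k j); auto. destruct (Nat.eqb_spec k i); auto.
Qed.
From Pilot Require Import Defs.
From Stdlib Require Import Reals Lra Lia FunctionalExtensionality.
From Coquelicot Require Import Coquelicot.
Open Scope R_scope.

(** * [tanh] and the kernels *)

Lemma tanh_exp2 x : tanh x = (exp (2 * x) - 1) / (exp (2 * x) + 1).
Proof.
  unfold tanh, sinh, cosh. replace (2 * x) with (x + x) by ring.
  rewrite exp_plus, exp_Ropp. assert (exp x > 0) by apply exp_pos.
  field; split; nra.
Qed.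

Lemma cosh_opp x : cosh (- x) = cosh x.
Proof. unfold cosh. rewrite Ropp_involutive. lra. Qed.

Lemma tanh_opp x : tanh (- x) = - tanh x.
Proof.
  unfold tanh, sinh. rewrite cosh_opp, Ropp_involutive. unfold Rdiv. ring.
Qed.

Lemma exp2_tanh x : exp (2 * x) = (1 + tanh x) / (1 - tanh x).
Proof. rewrite tanh_exp2. assert (exp (2 * x) > 0) by apply exp_pos. field; lra. Qed.

Lemma tanh_inj x y : tanh x = tanh y -> x = y.
Proof.
  intros H. assert (E : exp (2 * x) = exp (2 * y)) by (rewrite !exp2_tanh, H; reflexivity).
  apply exp_inv in E. lra.
Qed.

Lemma tanh_neq0 x : x <> 0 -> tanh x <> 0.
Proof.
  intros Hx E. apply Hx, tanh_inj. rewrite E. unfold tanh, sinh. rewrite Ropp_0, exp_0. lra.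
Qed.

(* The kernels [1 / (1 - e^{-alpha(t)})] of the Cherednik operators, as rational
   functions of [p = tanh t_j], [q = tanh t_k]. *)
Definition kern_sub (p q : R) : R := (1 + p) * (1 - q) / (2 * (p - q)).
Definition kern_add (p q : R) : R := (1 + p) * (1 + q) / (2 * (p + q)).
Definition kern_short (p : R) : R := (1 + p) / (2 * p).
Definition kern_long (p : R) : R := (1 + p) * (1 + p) / (4 * p).

Lemma exp2_neq x y : x <> y -> exp (2 * x) <> exp (2 * y).
Proof. intros Hxy E. apply exp_inv in E. lra. Qed.

Lemma kern_sub_tanh x y : x <> y -> / (1 - exp (-2 * (x - y))) = kern_sub (tanh x) (tanh y).
Proof.
  intros Hxy. unfold kern_sub. rewrite !tanh_exp2.
  replace (-2 * (x - y)) with (2 * y + - (2 * x)) by ring. rewrite exp_plus, exp_Ropp.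
  assert (exp (2 * x) > 0) by apply exp_pos. assert (exp (2 * y) > 0) by apply exp_pos.
  assert (exp (2 * x) - exp (2 * y) <> 0) by (apply Rminus_eq_contra, exp2_neq; auto).
  field; repeat split; lra.
Qed.

Lemma kern_add_tanh x y : x <> - y -> / (1 - exp (-2 * (x + y))) = kern_add (tanh x) (tanh y).
Proof.
  intros Hxy. unfold kern_add. rewrite !tanh_exp2.
  replace (-2 * (x + y)) with (- (2 * x + 2 * y)) by ring. rewrite exp_Ropp, exp_plus.
  assert (exp (2 * x) > 0) by apply exp_pos. assert (exp (2 * y) > 0) by apply exp_pos.
  assert (exp (2 * x) * exp (2 * y) <> 1).
  { rewrite <- exp_plus, <- exp_0. intros E. apply exp_inv in E. lra. }
  field; repeat split; try lra; intros E; nra.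
Qed.

Lemma kern_short_tanh x : x <> 0 -> / (1 - exp (-2 * x)) = kern_short (tanh x).
Proof.
  intros Hx. unfold kern_short. rewrite tanh_exp2.
  replace (-2 * x) with (- (2 * x)) by ring. rewrite exp_Ropp.
  assert (exp (2 * x) > 0) by apply exp_pos.
  assert (exp (2 * x) <> 1) by (rewrite <- exp_0, <- (Rmult_0_r 2); apply exp2_neq; auto).
  field; repeat split; lra.
Qed.

Lemma kern_long_tanh x : x <> 0 -> / (1 - exp (-4 * x)) = kern_long (tanh x).
Proof.
  intros Hx. unfold kern_long. rewrite tanh_exp2.
  replace (-4 * x) with (- (2 * x + 2 * x)) by ring. rewrite exp_Ropp, exp_plus.
  assert (exp (2 * x) > 0) by apply exp_pos.
  assert (exp (2 * x) <> 1) by (rewrite <- exp_0, <- (Rmult_0_r 2); apply exp2_neq; auto).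
  field; repeat split; try lra; intros E; nra.
Qed.

Lemma cosh_pos x : 0 < cosh x.
Proof.
  unfold cosh. assert (exp x > 0) by apply exp_pos. assert (exp (- x) > 0) by apply exp_pos. lra.
Qed.

Lemma is_derive_tanh x : is_derive tanh x (1 - tanh x * tanh x).
Proof.
  unfold tanh, sinh, cosh. assert (exp x > 0) by apply exp_pos. assert (exp (- x) > 0) by apply exp_pos.
  auto_derive; [lra|]. field. lra.
Qed.

Lemma is_derive_Rpower_cosh d x :
  is_derive (fun s => Rpower (cosh s) d) x (d * tanh x * Rpower (cosh x) d).
Proof.
  unfold Rpower, tanh, sinh. assert (P := cosh_pos x). unfold cosh in *.
  assert (exp x > 0) by apply exp_pos. assert (exp (- x) > 0) by apply exp_pos.
  auto_derive; [lra|]. unfold Rdiv. field. lra.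
Qed.

(* [1 - tanh^2 = 1 / cosh^2] *)
Lemma Rpower_cosh_tanh d x :
  Rpower (cosh x) d * ((1 + tanh x) * (tanh x - 1)) = - Rpower (cosh x) (d - 2).
Proof.
  replace (d - 2) with (d + - INR 2) by (simpl; ring).
  assert (C := cosh_pos x).
  rewrite Rpower_plus, Rpower_Ropp, Rpower_pow by exact C.
  unfold tanh, sinh. unfold cosh in *. rewrite exp_Ropp in *. assert (exp x > 0) by apply exp_pos.
  simpl. field. split; nra.
Qed.

(** * Conjugation by [f_delta] *)

Definition tanhv (t : pt) : pt := fun j => tanh (t j).

Lemma upd_id (u : pt) j : upd u j (u j) = u.
Proof.
  apply functional_extensionality; intros k; unfold upd. destruct (Nat.eqb_spec k j); subst; auto.
Qed.

Lemma tanhv_upd t j s : tanhv (upd t j s) = upd (tanhv t) j (tanh s).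
Proof. apply functional_extensionality; intros k; unfold tanhv, upd. destruct (Nat.eqb k j); auto. Qed.

Lemma tanhv_swap t i j : tanhv (swap i j t) = swap i j (tanhv t).
Proof.
  apply functional_extensionality; intros k; unfold tanhv, swap.
  destruct (Nat.eqb k i); [|destruct (Nat.eqb k j)]; auto.
Qed.

Lemma tanhv_sigma2 t i j : tanhv (sigma2 i j t) = sigma2 i j (tanhv t).
Proof.
  apply functional_extensionality; intros k; unfold tanhv, sigma2.
  destruct (Nat.eqb k i); [|destruct (Nat.eqb k j)]; auto; apply tanh_opp.
Qed.

Lemma tanhv_sigma1 t j : tanhv (sigma1 j t) = sigma1 j (tanhv t).
Proof.
  apply functional_extensionality; intros k; unfold tanhv, sigma1.
  destruct (Nat.eqb k j); auto; apply tanh_opp.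
Qed.

Lemma f_can_upd r d t j s : (j < r)%nat ->
  f_can r d (upd t j s) = Rpower (cosh s) d * rprod r (upd (fun k => Rpower (cosh (t k)) d) j 1).
Proof.
  intros Hj. unfold f_can. rewrite (rprod_factor r _ j Hj). unfold upd at 1. rewrite Nat.eqb_refl.
  f_equal. apply rprod_ext. intros k Hk. unfold upd. destruct (Nat.eqb k j); auto.
Qed.

Lemma f_can_swap r d t i j : (i < r)%nat -> (j < r)%nat -> f_can r d (swap i j t) = f_can r d t.
Proof.
  intros Hi Hj. unfold f_can. destruct (Nat.eq_dec i j) as [->|Hij].
  - apply rprod_ext; intros k _; unfold swap. destruct (Nat.eqb_spec k j); subst; auto.
  - apply (rprod_eq_off2 r _ _ i j); auto.
    + intros k _ Hki Hkj; unfold swap.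
      destruct (Nat.eqb_spec k i); [lia|]. destruct (Nat.eqb_spec k j); [lia|auto].
    + unfold swap. rewrite Nat.eqb_refl. destruct (Nat.eqb_spec j i); [lia|].
      rewrite Nat.eqb_refl. ring.
Qed.

Lemma f_can_sigma2 r d t i j : (i < r)%nat -> (j < r)%nat -> i <> j ->
  f_can r d (sigma2 i j t) = f_can r d t.
Proof.
  intros Hi Hj Hij. unfold f_can. apply (rprod_eq_off2 r _ _ i j); auto.
  - intros k _ Hki Hkj; unfold sigma2.
    destruct (Nat.eqb_spec k i); [lia|]. destruct (Nat.eqb_spec k j); [lia|auto].
  - unfold sigma2. rewrite Nat.eqb_refl. destruct (Nat.eqb_spec j i); [lia|].
    rewrite Nat.eqb_refl, !cosh_opp. ring.
Qed.

Lemma f_can_sigma1 r d t j : f_can r d (sigma1 j t) = f_can r d t.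
Proof.
  unfold f_can. apply rprod_ext; intros k _; unfold sigma1.
  destruct (Nat.eqb_spec k j) as [->|]; [rewrite cosh_opp|]; auto.
Qed.

Definition pair_term (j k : nat) (Q : pt -> R) (u : pt) : R :=
  (if Nat.ltb k j then - (kern_sub (u k) (u j) * (Q u - Q (swap k j u)))
   else if Nat.ltb j k then kern_sub (u j) (u k) * (Q u - Q (swap j k u)) else 0)
  + (if Nat.eqb k j then 0 else kern_add (u j) (u k) * (Q u - Q (sigma2 j k u))).

Lemma pair_term_linear j k al be Q1 Q2 u :
  pair_term j k (fun v => al * Q1 v + be * Q2 v) u = al * pair_term j k Q1 u + be * pair_term j k Q2 u.
Proof. unfold pair_term. destruct (Nat.ltb k j), (Nat.ltb j k), (Nat.eqb k j); ring. Qed.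

Lemma pair_term_scal j k al Q u : pair_term j k (fun v => al * Q v) u = al * pair_term j k Q u.
Proof. unfold pair_term. destruct (Nat.ltb k j), (Nat.ltb j k), (Nat.eqb k j); ring. Qed.

Section Conjugation.

Variables (r : nat) (a b iota delta : R).

(* [f_can_times Q] is [f_delta(t) Q(tanh t)]; on such functions [D_j] acts
   through [cherednik_tanh j Q dQ], where [dQ] is the partial derivative of
   [Q] in its [j]-th variable. *)
Definition f_can_times (Q : pt -> R) : func := fun t => f_can r delta t * Q (tanhv t).

Definition cherednik_tanh (j : nat) (Q : pt -> R) (dQ : R) (u : pt) : R :=
  delta * u j * Q u + (1 - u j * u j) * dQ
  + a * rsum r (fun k => pair_term j k Q u)
  + (2 * iota * kern_long (u j) + 2 * b * kern_short (u j)) * (Q u - Q (sigma1 j u))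
  - rho r a b iota j * Q u.

Lemma cherednik_tanh_linear j al be Q1 Q2 d1 d2 u :
  cherednik_tanh j (fun v => al * Q1 v + be * Q2 v) (al * d1 + be * d2) u =
  al * cherednik_tanh j Q1 d1 u + be * cherednik_tanh j Q2 d2 u.
Proof.
  unfold cherednik_tanh.
  rewrite (rsum_ext r _ (fun k => al * pair_term j k Q1 u + be * pair_term j k Q2 u))
    by (intros; apply pair_term_linear).
  rewrite rsum_add, !rsum_scal. ring.
Qed.

Lemma cherednik_tanh_scal j al Q dQ u :
  cherednik_tanh j (fun v => al * Q v) (al * dQ) u = al * cherednik_tanh j Q dQ u.
Proof.
  unfold cherednik_tanh.
  rewrite (rsum_ext r _ (fun k => al * pair_term j k Q u)) by (intros; apply pair_term_scal).
  rewrite rsum_scal. ring.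
Qed.

Lemma Derive_f_can_times Q t j dQ : (j < r)%nat ->
  is_derive (fun x => Q (upd (tanhv t) j x)) (tanh (t j)) dQ ->
  Derive (fun s => f_can_times Q (upd t j s)) (t j) =
  f_can r delta t * (delta * tanh (t j) * Q (tanhv t) + (1 - tanh (t j) * tanh (t j)) * dQ).
Proof.
  intros Hj HQ.
  set (C := rprod r (upd (fun k => Rpower (cosh (t k)) delta) j 1)).
  assert (DQ : is_derive (fun s => Q (upd (tanhv t) j (tanh s))) (t j)
                 (scal (1 - tanh (t j) * tanh (t j)) dQ))
    by (apply (is_derive_comp (fun x => Q (upd (tanhv t) j x)) tanh); [exact HQ|apply is_derive_tanh]).
  assert (D := is_derive_mult _ _ _ _ _ (is_derive_Rpower_cosh delta (t j)) DQ Rmult_comm).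
  apply is_derive_scal with (k := C), is_derive_unique in D.
  unfold scal, plus, mult in D; simpl in D. unfold mult in D; simpl in D.
  rewrite (Derive_ext _ (fun s => C * (Rpower (cosh s) delta * Q (upd (tanhv t) j (tanh s))))).
  2: { intros s. unfold f_can_times. rewrite f_can_upd, tanhv_upd by auto. fold C. ring. }
  assert (Hf : f_can r delta t = Rpower (cosh (t j)) delta * C)
    by (unfold C; rewrite <- (f_can_upd r delta t j (t j) Hj), upd_id; reflexivity).
  rewrite D, Hf. replace (tanh (t j)) with (tanhv t j) by reflexivity. rewrite upd_id. ring.
Qed.

Lemma f_can_times_swap Q t i j : (i < r)%nat -> (j < r)%nat ->
  f_can_times Q (swap i j t) = f_can r delta t * Q (swap i j (tanhv t)).
Proof. intros. unfold f_can_times. rewrite f_can_swap, tanhv_swap; auto. Qed.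

Lemma f_can_times_sigma2 Q t i j : (i < r)%nat -> (j < r)%nat -> i <> j ->
  f_can_times Q (sigma2 i j t) = f_can r delta t * Q (sigma2 i j (tanhv t)).
Proof. intros. unfold f_can_times. rewrite f_can_sigma2, tanhv_sigma2; auto. Qed.

Lemma f_can_times_sigma1 Q t j :
  f_can_times Q (sigma1 j t) = f_can r delta t * Q (sigma1 j (tanhv t)).
Proof. unfold f_can_times. rewrite f_can_sigma1, tanhv_sigma1; auto. Qed.

Lemma cherednik_f_can_times Q dQ t j : (j < r)%nat -> regular r t ->
  is_derive (fun x => Q (upd (tanhv t) j x)) (tanh (t j)) dQ ->
  cherednik r a b iota j (f_can_times Q) t = f_can r delta t * cherednik_tanh j Q dQ (tanhv t).
Proof.
  intros Hj [Rt0 Rt] HQ. unfold cherednik, cherednik_tanh.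
  rewrite (Derive_f_can_times Q t j dQ Hj HQ), (rsum_restrict j r) by lia.
  set (f := f_can r delta t). set (u := tanhv t).
  lazymatch goal with
  | |- _ - a * rsum r ?A + a * rsum r ?B + a * rsum r ?C + _ + _ - _ = _ =>
    assert (Hpair : rsum r A = rsum r B + rsum r C - rsum r (fun k => f * pair_term j k Q u))
  end.
  { rewrite <- rsum_add, <- rsum_sub. apply rsum_ext; intros k Hk.
    assert (Hkj := fun Hne : k <> j => Rt k j Hk Hj Hne).
    assert (Hjk := fun Hne : j <> k => Rt j k Hj Hk Hne).
    unfold pair_term.
    destruct (Nat.ltb_spec k j), (Nat.ltb_spec j k), (Nat.eqb_spec k j); try lia; unfold Rdiv;
      rewrite ?f_can_times_swap, ?f_can_times_sigma2, ?kern_sub_tanh, ?kern_add_tanh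
        by (try apply Hkj; try apply Hjk; lia);
      unfold f_can_times; fold f u; unfold u, tanhv; ring. }
  rewrite Hpair, rsum_scal. unfold Rdiv.
  rewrite f_can_times_sigma1, kern_long_tanh, kern_short_tanh by auto.
  unfold f_can_times. fold f u. unfold u, tanhv. ring.
Qed.

End Conjugation.

Lemma regular_signed_perm r t s (pi : nat -> nat) : regular r t ->
  (forall k, (k < r)%nat -> (pi k < r)%nat /\ (s k = t (pi k) \/ s k = - t (pi k))) ->
  (forall k l, pi k = pi l -> k = l) -> regular r s.
Proof.
  intros [Rt0 Rt] Hs Hinj. split.
  - intros k Hk. destruct (Hs k Hk) as [Hp [E|E]]; rewrite E; [apply Rt0; auto|].
    intros E2. apply (Rt0 (pi k) Hp). lra.
  - intros k l Hk Hl Hkl. destruct (Hs k Hk) as [Hp [E|E]], (Hs l Hl) as [Hq [E'|E']];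
      rewrite E, E'; assert (Hpi : pi k <> pi l) by (intros F; apply Hkl, Hinj, F);
      destruct (Rt (pi k) (pi l) Hp Hq Hpi); split; lra.
Qed.

Definition transp (i j k : nat) : nat := if Nat.eqb k i then j else if Nat.eqb k j then i else k.

Lemma transp_inj i j k l : transp i j k = transp i j l -> k = l.
Proof.
  unfold transp.
  destruct (Nat.eqb_spec k i), (Nat.eqb_spec k j), (Nat.eqb_spec l i), (Nat.eqb_spec l j); lia.
Qed.

Lemma transp_lt r i j k : (i < r)%nat -> (j < r)%nat -> (k < r)%nat -> (transp i j k < r)%nat.
Proof. unfold transp. destruct (Nat.eqb_spec k i), (Nat.eqb_spec k j); lia. Qed.

Lemma regular_swap r t i j : regular r t -> (i < r)%nat -> (j < r)%nat -> regular r (swap i j t).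
Proof.
  intros Rt Hi Hj. apply (regular_signed_perm r t _ (transp i j) Rt); [|apply transp_inj].
  intros k Hk. split; [apply transp_lt; auto|left]. unfold swap, transp.
  destruct (Nat.eqb k i); [|destruct (Nat.eqb k j)]; auto.
Qed.

Lemma regular_sigma2 r t i j : regular r t -> (i < r)%nat -> (j < r)%nat -> regular r (sigma2 i j t).
Proof.
  intros Rt Hi Hj. apply (regular_signed_perm r t _ (transp i j) Rt); [|apply transp_inj].
  intros k Hk. split; [apply transp_lt; auto|]. unfold sigma2, transp.
  destruct (Nat.eqb k i); [|destruct (Nat.eqb k j)]; auto.
Qed.

Lemma regular_sigma1 r t j : regular r t -> regular r (sigma1 j t).
Proof.
  intros Rt. apply (regular_signed_perm r t _ (fun k => k) Rt); [|auto].
  intros k Hk. split; auto. unfold sigma1. destruct (Nat.eqb_spec k j); subst; auto.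
Qed.

Lemma regular_tanhv r t : regular r t -> regular r (tanhv t).
Proof.
  intros [Rt0 Rt]. split.
  - intros j Hj. apply tanh_neq0, Rt0; auto.
  - intros i j Hi Hj Hij. destruct (Rt i j Hi Hj Hij) as [N1 N2]. unfold tanhv. split.
    + intros E; apply N1, tanh_inj, E.
    + intros E; apply N2, tanh_inj. rewrite tanh_opp; auto.
Qed.

Lemma locally_neq (x c : R) : x <> c -> locally x (fun s => s <> c).
Proof.
  intros H. assert (P : 0 < Rabs (x - c)) by (apply Rabs_pos_lt; lra).
  exists (mkposreal _ P). intros y Hy E; subst. simpl in Hy.
  unfold ball in Hy; simpl in Hy; unfold AbsRing_ball, abs, minus, plus, opp in Hy; simpl in Hy.
  replace (c + - x) with (- (x - c)) in Hy by ring. rewrite Rabs_Ropp in Hy. lra.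
Qed.

Lemma locally_forall_lt (x : R) n (P : nat -> R -> Prop) :
  (forall k, (k < n)%nat -> locally x (P k)) -> locally x (fun s => forall k, (k < n)%nat -> P k s).
Proof.
  induction n as [|n IH]; intros H.
  - apply (@filter_forall _ (locally x) _). intros; lia.
  - generalize (@filter_and _ (locally x) _ _ _ (IH (fun k Hk => H k ltac:(lia))) (H n ltac:(lia))).
    apply filter_imp. intros s [Hlt Hn] k Hk.
    destruct (Nat.eq_dec k n); [subst; auto|]. apply Hlt; lia.
Qed.

Lemma regular_locally_upd r t j : regular r t -> (j < r)%nat ->
  locally (t j) (fun s => regular r (upd t j s)).
Proof.
  intros [Rt0 Rt] Hj.
  assert (L : locally (t j) (fun s => forall k, (k < r)%nat -> k <> j -> s <> t k /\ s <> - t k)).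
  { apply locally_forall_lt. intros k Hk. destruct (Nat.eq_dec k j).
    - apply (@filter_forall _ (locally (t j)) _). intros; lia.
    - destruct (Rt j k Hj Hk ltac:(auto)) as [Hne Hneg].
      generalize (@filter_and _ (locally (t j)) _ _ _ (locally_neq _ _ Hne) (locally_neq _ _ Hneg)).
      apply filter_imp. tauto. }
  generalize (@filter_and _ (locally (t j)) _ _ _ (locally_neq (t j) 0 (Rt0 j Hj)) L); apply filter_imp.
  intros s [Hs0 Hs]. split.
  - intros k Hk. unfold upd. destruct (Nat.eqb_spec k j); auto.
  - intros k l Hk Hl Hkl. unfold upd.
    destruct (Nat.eqb_spec k j), (Nat.eqb_spec l j); subst; try lia.
    + apply Hs; auto.
    + destruct (Hs k Hk); auto. split; lra.
    + apply Rt; auto.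
Qed.

(* The regular points form an open set stable under the Weyl group. *)
Lemma cherednik_regular_ext r a b iota j g1 g2 t : (forall s, regular r s -> g1 s = g2 s) ->
  regular r t -> (j < r)%nat -> cherednik r a b iota j g1 t = cherednik r a b iota j g2 t.
Proof.
  intros E Rt Hj. unfold cherednik.
  rewrite (Derive_ext_loc (fun s => g1 (upd t j s)) (fun s => g2 (upd t j s))).
  2: { generalize (regular_locally_upd r t j Rt Hj); apply filter_imp. auto. }
  rewrite (E t Rt), (E (sigma1 j t)) by (apply regular_sigma1; auto).
  repeat match goal with
  | |- rsum ?n _ = rsum ?n _ => apply rsum_ext; intros k Hk
  | |- g1 ?s = g2 ?s => apply E
  | |- (if ?c then _ else _) = _ => destruct c
  | |- _ => f_equal
  end.
  all: first [apply regular_swap | apply regular_sigma2]; auto; lia.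
Qed.

(** * Elementary symmetric polynomials *)

Fixpoint esym (n k : nat) (z : nat -> R) : R :=
  match n, k with
  | O, O => 1
  | O, S _ => 0
  | S _, O => 1
  | S n', S k' => esym n' k z + z n' * esym n' k' z
  end.

Lemma esym_0 n z : esym n 0 z = 1.
Proof. destruct n; reflexivity. Qed.

Lemma esym_S n k z : esym (S n) (S k) z = esym n (S k) z + z n * esym n k z.
Proof. reflexivity. Qed.

Lemma esym_ext n k z z' : (forall j, (j < n)%nat -> z j = z' j) -> esym n k z = esym n k z'.
Proof.
  revert k; induction n as [|n IH]; intros [|k] H; auto.
  rewrite !esym_S, H, !IH by (intros; try apply H; lia). reflexivity.
Qed.

Lemma esym_gt n k z : (n < k)%nat -> esym n k z = 0.
Proof.
  revert k; induction n as [|n IH]; intros [|k] H; try lia; auto.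
  rewrite esym_S, !IH by lia. ring.
Qed.

Lemma esym_diag n z : esym n n z = rprod n z.
Proof. induction n as [|n IH]; auto. rewrite esym_S, esym_gt, IH by lia. simpl. ring. Qed.

Lemma esym_upd_ge n k z i w : (n <= i)%nat -> esym n k (upd z i w) = esym n k z.
Proof.
  intros H; apply esym_ext. intros j Hj; unfold upd. destruct (Nat.eqb_spec j i); [lia|auto].
Qed.

Lemma esym_affine n k z i w :
  esym n k (upd z i w) = esym n k (upd z i 0) + w * (esym n k (upd z i 1) - esym n k (upd z i 0)).
Proof.
  revert k; induction n as [|n IH]; intros [|k]; rewrite ?esym_0; try (simpl; ring).
  rewrite !esym_S. destruct (Nat.eq_dec n i) as [->|Hne].
  - rewrite !esym_upd_ge by lia. unfold upd; rewrite Nat.eqb_refl. ring.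
  - assert (E : forall v, upd z i v n = z n)
      by (intros; unfold upd; destruct (Nat.eqb_spec n i); [lia|auto]).
    rewrite !E, (IH (S k)), (IH k). ring.
Qed.

(* For [F] affine in [z_i] this is the coefficient of [z_i]. *)
Definition slope (F : (nat -> R) -> R) (z : nat -> R) (i : nat) : R :=
  F (upd z i 1) - F (upd z i 0).

Lemma slope_esym_0 n z i : slope (esym n 0) z i = 0.
Proof. unfold slope; rewrite !esym_0; ring. Qed.

Lemma slope_esym_S n k z i : (i < n)%nat ->
  slope (esym (S n) (S k)) z i = slope (esym n (S k)) z i + z n * slope (esym n k) z i.
Proof.
  intros H. unfold slope. rewrite !esym_S.
  assert (E : forall v, upd z i v n = z n)
    by (intros; unfold upd; destruct (Nat.eqb_spec n i); [lia|auto]).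
  rewrite !E. ring.
Qed.

Lemma slope_esym_last n k z : slope (esym (S n) (S k)) z n = esym n k z.
Proof. unfold slope. rewrite !esym_S, !esym_upd_ge by lia. unfold upd; rewrite Nat.eqb_refl. ring. Qed.

Lemma sum_slope_esym n k z : rsum n (slope (esym n (S k)) z) = (INR n - INR k) * esym n k z.
Proof.
  revert k; induction n as [|n IH]; intros k.
  - destruct k; simpl; ring.
  - rewrite rsum_S, slope_esym_last.
    rewrite (rsum_ext n _ (fun i => slope (esym n (S k)) z i + z n * slope (esym n k) z i))
      by (intros; apply slope_esym_S; auto).
    rewrite rsum_add, rsum_scal, IH. destruct k as [|k].
    + rewrite (rsum_eq0 n) by (intros; apply slope_esym_0). rewrite !esym_0, S_INR. simpl. ring.
    + rewrite IH, esym_S, !S_INR. ring.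
Qed.

(* Euler's identity for the homogeneous polynomial [e_k]. *)
Lemma sum_mul_slope_esym n k z : rsum n (fun i => z i * slope (esym n k) z i) = INR k * esym n k z.
Proof.
  revert k; induction n as [|n IH]; intros k.
  - destruct k; simpl; ring.
  - destruct k as [|k].
    + rewrite rsum_eq0; [simpl; ring|]. intros; rewrite slope_esym_0; ring.
    + rewrite rsum_S, slope_esym_last.
      rewrite (rsum_ext n _ (fun i => z i * slope (esym n (S k)) z i
                                      + z n * (z i * slope (esym n k) z i)))
        by (intros; rewrite slope_esym_S by auto; ring).
      rewrite rsum_add, rsum_scal, !IH, esym_S, !S_INR. ring.
Qed.

(** * The polynomials of the induction *)

Section Spoly.

Variables (r : nat) (a iota delta : R).

Definition lam (j : nat) : R := delta - 1 + iota + a * INR j.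
Definition mu (j : nat) : R := - a * INR (r - 1 - j).
Definition mu_prod (k m : nat) : R := rprod (m - k) (fun i => mu (k + i)).
Definition gam (m k : nat) : R := rprod k lam * mu_prod k m.

(* [spoly m z = sum_k gam m k e_k(z_0, ..., z_(m-1))]; the coefficients [gam]
   are exactly those making [spoly_S] hold. *)
Definition spoly (m : nat) (z : nat -> R) : R := rsum (S m) (fun k => gam m k * esym m k z).

Lemma mu_prod_Sl k m : (k < m)%nat -> mu_prod k m = mu k * mu_prod (S k) m.
Proof.
  intros H. unfold mu_prod. replace (m - k)%nat with (S (m - S k)) by lia.
  rewrite rprod_Sl, Nat.add_0_r. f_equal. apply rprod_ext; intros; f_equal; lia.
Qed.

Lemma mu_prod_S k m : (k <= m)%nat -> mu_prod k (S m) = mu_prod k m * mu m.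
Proof.
  intros H. unfold mu_prod. replace (S m - k)%nat with (S (m - k)) by lia.
  rewrite rprod_S. do 2 f_equal. lia.
Qed.

Lemma mu_prod_nil k m : (m <= k)%nat -> mu_prod k m = 1.
Proof. intros H; unfold mu_prod. replace (m - k)%nat with O by lia. reflexivity. Qed.

(* because [mu (r - 1) = 0] *)
Lemma mu_prod_r k : (k < r)%nat -> mu_prod k r = 0.
Proof.
  intros H. unfold mu_prod. rewrite (rprod_factor (r - k) _ (r - k - 1)) by lia.
  replace (k + (r - k - 1))%nat with (r - 1)%nat by lia.
  unfold mu. rewrite Nat.sub_diag. simpl INR. ring.
Qed.

Lemma gam_S_mu m k : (k <= m)%nat -> gam (S m) k = mu m * gam m k.
Proof. intros H; unfold gam. rewrite mu_prod_S by auto. ring. Qed.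

Lemma gam_S_S m k : (m < r)%nat -> (k <= m)%nat ->
  gam (S m) (S k) = lam 0 * gam m k + a * (INR m - INR k) * gam m (S k) + a * INR k * gam m k.
Proof.
  intros Hr H. unfold gam. rewrite rprod_S.
  destruct (Nat.eq_dec k m) as [->|Hne].
  - rewrite !mu_prod_nil by lia. unfold lam. rewrite INR_0. ring.
  - rewrite (mu_prod_Sl k m), (mu_prod_S (S k) m) by lia.
    unfold mu, lam. rewrite !minus_INR by lia. rewrite INR_0. ring.
Qed.

Lemma spoly_ext m z z' : (forall j, (j < m)%nat -> z j = z' j) -> spoly m z = spoly m z'.
Proof. intros H. unfold spoly. apply rsum_ext; intros. rewrite (esym_ext _ _ z z'); auto. Qed.

Lemma slope_spoly m z i : slope (spoly m) z i = rsum (S m) (fun k => gam m k * slope (esym m k) z i).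
Proof. unfold slope, spoly. rewrite <- rsum_sub. apply rsum_ext; intros; ring. Qed.

Lemma spoly_affine m z i w : spoly m (upd z i w) = spoly m (upd z i 0) + w * slope (spoly m) z i.
Proof.
  rewrite slope_spoly. unfold spoly. rewrite <- rsum_scal, <- rsum_add. apply rsum_ext; intros k _.
  rewrite esym_affine. unfold slope. ring.
Qed.

Lemma rsum_esym_S m (c : nat -> R) z :
  rsum (S (S m)) (fun k => c k * esym (S m) k z) =
  rsum (S m) (fun k => c k * esym m k z) + z m * rsum (S m) (fun k => c (S k) * esym m k z).
Proof.
  rewrite rsum_Sl, (rsum_Sl m (fun k => c k * esym m k z)), !esym_0.
  rewrite (rsum_ext (S m) (fun k => c (S k) * esym (S m) (S k) z)
            (fun k => c (S k) * esym m (S k) z + z m * (c (S k) * esym m k z)))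
    by (intros; rewrite esym_S; ring).
  rewrite rsum_add, rsum_scal, (rsum_S m (fun k => c (S k) * esym m (S k) z)), (esym_gt m (S m)) by lia.
  ring.
Qed.

Lemma sum_slope_spoly m z :
  rsum m (slope (spoly m) z) = rsum (S m) (fun k => gam m (S k) * ((INR m - INR k) * esym m k z)).
Proof.
  rewrite (rsum_ext m _ (fun i => rsum (S m) (fun k => gam m k * slope (esym m k) z i)))
    by (intros; apply slope_spoly).
  rewrite rsum_comm, rsum_Sl, (rsum_S m (fun k => gam m (S k) * _)).
  rewrite (rsum_eq0 m (fun i => gam m 0 * slope (esym m 0) z i))
    by (intros; rewrite slope_esym_0; ring).
  rewrite (rsum_ext m _ (fun k => gam m (S k) * ((INR m - INR k) * esym m k z))).
  - ring.
  - intros k _. rewrite rsum_scal, sum_slope_esym. reflexivity.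
Qed.

Lemma sum_mul_slope_spoly m z :
  rsum m (fun i => z i * slope (spoly m) z i) = rsum (S m) (fun k => gam m k * (INR k * esym m k z)).
Proof.
  rewrite (rsum_ext m _ (fun i => rsum (S m) (fun k => z i * (gam m k * slope (esym m k) z i))))
    by (intros; rewrite slope_spoly, rsum_scal; reflexivity).
  rewrite rsum_comm. apply rsum_ext; intros k _.
  rewrite <- sum_mul_slope_esym, <- rsum_scal. apply rsum_ext; intros; ring.
Qed.

Lemma spoly_S m z : (m < r)%nat ->
  spoly (S m) z = (lam 0 * z m + mu m) * spoly m z
    + a * z m * (rsum m (slope (spoly m) z) + rsum m (fun i => z i * slope (spoly m) z i)).
Proof.
  intros Hm. rewrite sum_slope_spoly, sum_mul_slope_spoly. unfold spoly. rewrite rsum_esym_S.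
  rewrite (rsum_ext (S m) (fun k => gam (S m) k * esym m k z)
             (fun k => mu m * (gam m k * esym m k z)))
    by (intros; rewrite gam_S_mu by lia; ring).
  rewrite (rsum_ext (S m) (fun k => gam (S m) (S k) * esym m k z)
             (fun k => lam 0 * (gam m k * esym m k z)
                       + a * (gam m (S k) * ((INR m - INR k) * esym m k z))
                       + a * (gam m k * (INR k * esym m k z))))
    by (intros; rewrite gam_S_S by lia; ring).
  rewrite !rsum_add, !rsum_scal. ring.
Qed.

Lemma spoly_r z : spoly r z = rprod r lam * rprod r z.
Proof.
  unfold spoly. rewrite rsum_S, rsum_eq0 by (intros k Hk; unfold gam; rewrite mu_prod_r by auto; ring).
  rewrite esym_diag. unfold gam. rewrite mu_prod_nil by lia. ring.
Qed.

End Spoly.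

Lemma pair_identity_linear (e : R -> R) (al be p q : R) :
  (forall x, e x = (1 + x) * (al + be * x)) -> p <> q -> p <> - q ->
  - (kern_sub p q * (e p - e q)) + kern_add q p * (e p - e (- q)) = q * e p.
Proof.
  intros He Hpq Hpq'. rewrite !He. unfold kern_sub, kern_add.
  field. split; intros E; [apply Hpq|apply Hpq']; lra.
Qed.

Lemma pair_identity_quadratic (e : R -> R) (al be p q : R) :
  (forall x, e x = (1 + x) * (al + be * x)) -> p <> q -> p <> - q ->
  - (kern_sub p q * ((1 + q) * e p - (1 + p) * e q))
  + kern_add q p * ((1 + q) * e p - (1 - p) * e (- q))
  = (1 + q) * (e p + (q - 1) * p * (1 + p) * be).
Proof.
  intros He Hpq Hpq'. rewrite !He. unfold kern_sub, kern_add.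
  field. split; intros E; [apply Hpq|apply Hpq']; lra.
Qed.

Lemma pair_identity_const (c p q : R) : q <> p -> q <> - p ->
  kern_sub q p * ((1 + q) * c - (1 + p) * c) + kern_add q p * ((1 + q) * c - (1 - p) * c)
  = (1 + q) * c.
Proof.
  intros Hqp Hqp'. unfold kern_sub, kern_add.
  field. split; intros E; [apply Hqp|apply Hqp']; lra.
Qed.

Definition zshift (u : pt) : nat -> R := fun j => u j - 1.

Definition one_plus_prod (m : nat) (u : pt) : R := rprod m (fun j => 1 + u j).

Lemma one_plus_prod_upd m u i x : (i < m)%nat ->
  one_plus_prod m (upd u i x) = (1 + x) * one_plus_prod m (upd u i 0).
Proof.
  intros H. unfold one_plus_prod.
  rewrite (rprod_factor m _ i H), (rprod_factor m (fun j => 1 + upd u i 0 j) i H).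
  assert (Hi : forall v, upd u i v i = v) by (intros; unfold upd; rewrite Nat.eqb_refl; auto).
  cbv beta. rewrite !Hi.
  rewrite (rprod_ext m (upd (fun j => 1 + upd u i x j) i 1)
                       (upd (fun j => 1 + upd u i 0 j) i 1)); [ring|].
  intros k _. unfold upd. destruct (Nat.eqb k i); auto.
Qed.

Lemma one_plus_prod_split m u i : (i < m)%nat ->
  one_plus_prod m u = (1 + u i) * one_plus_prod m (upd u i 0).
Proof. intros H. rewrite <- (one_plus_prod_upd m u i (u i) H), upd_id. reflexivity. Qed.

Section Induction.

Variables (r : nat) (a b iota delta : R).

Local Notation sp := (spoly r a iota delta).

Definition Psi (m : nat) (u : pt) : R := one_plus_prod m u * sp m (zshift u).

Definition Phi (m : nat) (u : pt) : R := rprod m (fun j => delta + a * INR j) * Psi m u.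

Lemma Psi_ext m u v : (forall j, (j < m)%nat -> u j = v j) -> Psi m u = Psi m v.
Proof.
  intros H. unfold Psi, one_plus_prod.
  rewrite (rprod_ext m _ (fun j => 1 + v j)) by (intros; rewrite H; auto).
  f_equal. apply spoly_ext. intros; unfold zshift; rewrite H; auto.
Qed.

Lemma Psi_upd m u i x : (i < m)%nat ->
  Psi m (upd u i x) =
  (1 + x) * (one_plus_prod m (upd u i 0) * (sp m (upd (zshift u) i 0) - slope (sp m) (zshift u) i)
             + one_plus_prod m (upd u i 0) * slope (sp m) (zshift u) i * x).
Proof.
  intros H. unfold Psi. rewrite one_plus_prod_upd by auto.
  replace (zshift (upd u i x)) with (upd (zshift u) i (x - 1)).
  - rewrite spoly_affine. ring.
  - apply functional_extensionality; intros k; unfold zshift, upd. destruct (Nat.eqb k i); auto.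
Qed.


Lemma Psi_swap_lt m u k : (k < m)%nat -> Psi m (swap k m u) = Psi m (upd u k (u m)).
Proof.
  intros H; apply Psi_ext; intros j Hj; unfold swap, upd.
  destruct (Nat.eqb j k); auto. destruct (Nat.eqb_spec j m); [lia|auto].
Qed.

Lemma Psi_sigma2_lt m u k : (k < m)%nat -> Psi m (sigma2 m k u) = Psi m (upd u k (- u m)).
Proof.
  intros H; apply Psi_ext; intros j Hj; unfold sigma2, upd.
  destruct (Nat.eqb_spec j m); [lia|]. destruct (Nat.eqb j k); auto.
Qed.

Lemma Psi_swap_gt m u k : (m < k)%nat -> Psi m (swap m k u) = Psi m u.
Proof.
  intros H; apply Psi_ext; intros j Hj; unfold swap.
  destruct (Nat.eqb_spec j m); [lia|]. destruct (Nat.eqb_spec j k); [lia|auto].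
Qed.

Lemma Psi_sigma2_gt m u k : (m < k)%nat -> Psi m (sigma2 m k u) = Psi m u.
Proof.
  intros H; apply Psi_ext; intros j Hj; unfold sigma2.
  destruct (Nat.eqb_spec j m); [lia|]. destruct (Nat.eqb_spec j k); [lia|auto].
Qed.

Lemma Psi_sigma1 m u : Psi m (sigma1 m u) = Psi m u.
Proof. apply Psi_ext; intros j Hj; unfold sigma1. destruct (Nat.eqb_spec j m); [lia|auto]. Qed.

Lemma Psi_upd_m m u x : Psi m (upd u m x) = Psi m u.
Proof. apply Psi_ext; intros j Hj; unfold upd. destruct (Nat.eqb_spec j m); [lia|auto]. Qed.

Lemma pair_term_Psi m u k : regular r u -> (m < r)%nat -> (k < r)%nat ->
  pair_term m k (Psi m) u = if Nat.ltb k m then u m * Psi m u else 0.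
Proof.
  intros [_ Ru] Hm Hk. unfold pair_term.
  destruct (Nat.ltb_spec k m), (Nat.ltb_spec m k), (Nat.eqb_spec k m); try lia.
  - rewrite Psi_swap_lt, Psi_sigma2_lt by auto.
    destruct (Ru k m Hk Hm) as [Hne Hneg]; [lia|].
    pose proof (pair_identity_linear (fun x => Psi m (upd u k x)) _ _ (u k) (u m)
                  (fun x => Psi_upd m u k x ltac:(auto)) Hne Hneg) as E.
    cbv beta in E. rewrite upd_id in E. exact E.
  - rewrite Psi_swap_gt, Psi_sigma2_gt by auto. ring.
  - ring.
Qed.

Lemma pair_term_one_plus_Psi m u k : regular r u -> (m < r)%nat -> (k < r)%nat ->
  pair_term m k (fun v => (1 + v m) * Psi m v) u =
  if Nat.ltb k m then (1 + u m) * Psi m u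
                      + (1 + u m) * (u m - 1) * one_plus_prod m u
                        * (1 + zshift u k) * slope (sp m) (zshift u) k
  else if Nat.ltb m k then (1 + u m) * Psi m u else 0.
Proof.
  intros [_ Ru] Hm Hk. unfold pair_term.
  destruct (Nat.ltb_spec k m), (Nat.ltb_spec m k), (Nat.eqb_spec k m); try lia.
  - rewrite Psi_swap_lt, Psi_sigma2_lt by auto.
    destruct (Ru k m Hk Hm) as [Hne Hneg]; [lia|].
    replace (swap k m u m) with (u k)
      by (unfold swap; destruct (Nat.eqb_spec m k); [lia|now rewrite Nat.eqb_refl]).
    replace (1 + sigma2 m k u m) with (1 - u k) by (unfold sigma2; rewrite Nat.eqb_refl; ring).
    pose proof (pair_identity_quadratic (fun x => Psi m (upd u k x)) _ _ (u k) (u m)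
                  (fun x => Psi_upd m u k x ltac:(auto)) Hne Hneg) as E.
    cbv beta in E. rewrite upd_id in E. cbv iota. rewrite E.
    rewrite (one_plus_prod_split m u k) by auto. unfold zshift. ring.
  - rewrite Psi_swap_gt, Psi_sigma2_gt by auto. destruct (Ru m k Hm Hk) as [Hne Hneg]; [lia|].
    unfold swap, sigma2. rewrite Nat.eqb_refl.
    replace (1 + - u k) with (1 - u k) by ring.
    apply pair_identity_const; auto.
  - ring.
Qed.

Lemma rho_lt m : (m < r)%nat -> rho r a b iota m = rho r a b iota 0 - a * INR m.
Proof. intros H. unfold rho. rewrite Nat.sub_0_r, (minus_INR (r - 1) m) by lia. ring. Qed.

Lemma cherednik_tanh_Psi m u : regular r u -> (m < r)%nat ->
  cherednik_tanh r a b iota delta m (Psi m) 0 u =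
  (delta + a * INR m) * ((1 + u m) * Psi m u) - (delta + rho r a b iota 0) * Psi m u.
Proof.
  intros Ru Hm. unfold cherednik_tanh.
  rewrite (rsum_ext r _ (fun k => if Nat.ltb k m then u m * Psi m u else 0))
    by (intros; apply pair_term_Psi; auto).
  rewrite <- rsum_restrict, rsum_const, Psi_sigma1, rho_lt by lia. ring.
Qed.

Lemma cherednik_tanh_one_plus_Psi m u : regular r u -> (m < r)%nat ->
  cherednik_tanh r a b iota delta m (fun v => (1 + v m) * Psi m v) (Psi m u) u =
  (delta + rho r a b iota 0) * ((1 + u m) * Psi m u) + Psi (S m) u.
Proof.
  intros Ru Hm. unfold cherednik_tanh.
  rewrite (rsum_ext r _ _ (fun k Hk => pair_term_one_plus_Psi m u k Ru Hm Hk)), rsum_piecewise by auto.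
  rewrite rsum_add, rsum_const.
  rewrite (rsum_ext m _ (fun i => ((1 + u m) * (u m - 1) * one_plus_prod m u)
                                  * (slope (sp m) (zshift u) i + zshift u i * slope (sp m) (zshift u) i)))
    by (intros; ring).
  rewrite rsum_scal, rsum_add.
  assert (HPsiS : Psi (S m) u = one_plus_prod m u * (1 + u m) * sp (S m) (zshift u)) by reflexivity.
  rewrite HPsiS, spoly_S, Psi_sigma1, rho_lt by auto.
  replace (zshift u m) with (u m - 1) by reflexivity.
  replace (1 + sigma1 m u m) with (1 - u m) by (unfold sigma1; rewrite Nat.eqb_refl; ring).
  destruct Ru as [Ru0 _]. assert (u m <> 0) by (apply Ru0; auto).
  unfold Psi, kern_long, kern_short, lam, mu, rho.
  rewrite INR_0, Nat.sub_0_r, (minus_INR (r - 1) m) by lia.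
  field. auto.
Qed.

Lemma prod_ops_f_can_S m : (m < r)%nat ->
  (forall t, regular r t -> prod_ops m r a b iota (delta + rho r a b iota 0) (f_can r delta) t
                            = f_can_times r delta (Phi m) t) ->
  forall t, regular r t -> prod_ops (S m) r a b iota (delta + rho r a b iota 0) (f_can r delta) t
                           = f_can_times r delta (Phi (S m)) t.
Proof.
  intros Hm IH t Rt.
  set (c := delta + rho r a b iota 0) in *. set (P := rprod m (fun j => delta + a * INR j)).
  set (G1 := fun v => P * (delta + a * INR m) * ((1 + v m) * Psi m v) + (- P * c) * Psi m v).
  assert (D1 : forall s, regular r s ->
            cherednik r a b iota m (prod_ops m r a b iota c (f_can r delta)) s
            = f_can_times r delta G1 s).
  { intros s Rs. rewrite (cherednik_regular_ext r a b iota m _ _ s IH Rs Hm).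
    rewrite (cherednik_f_can_times r a b iota delta (Phi m) (P * 0) s m Hm Rs).
    - unfold Phi. fold P. rewrite cherednik_tanh_scal, cherednik_tanh_Psi by auto using regular_tanhv.
      unfold f_can_times, G1. fold c. ring.
    - apply (is_derive_ext (fun _ => Phi m (tanhv s))).
      + intros x. unfold Phi. rewrite Psi_upd_m. reflexivity.
      + auto_derive; auto; ring. }
  cbn [prod_ops]. unfold factor_op. fold c.
  rewrite (cherednik_regular_ext r a b iota m _ _ t D1 Rt Hm).
  rewrite (cherednik_f_can_times r a b iota delta G1
             (P * (delta + a * INR m) * Psi m (tanhv t) + (- P * c) * 0) t m Hm Rt).
  - unfold G1. rewrite cherednik_tanh_linear, cherednik_tanh_Psi, cherednik_tanh_one_plus_Psi
      by auto using regular_tanhv.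
    rewrite (IH t Rt). unfold f_can_times, Phi. rewrite rprod_S. fold P c. ring.
  - apply (is_derive_ext (fun x => P * (delta + a * INR m) * ((1 + x) * Psi m (tanhv t))
                                  + (- P * c) * Psi m (tanhv t))).
    + intros x. unfold G1. rewrite !Psi_upd_m. unfold upd. rewrite Nat.eqb_refl. reflexivity.
    + auto_derive; auto. ring.
Qed.

Lemma prod_ops_f_can m : (m <= r)%nat -> forall t, regular r t ->
  prod_ops m r a b iota (delta + rho r a b iota 0) (f_can r delta) t = f_can_times r delta (Phi m) t.
Proof.
  induction m as [|m IH]; intros Hm t Rt.
  - unfold f_can_times, Phi, Psi, one_plus_prod, spoly, gam, mu_prod. simpl. ring.
  - apply prod_ops_f_can_S; auto. apply IH. lia.
Qed.

Lemma Phi_r u : Phi r u =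
  rprod r (fun j => delta + a * INR j) * rprod r (lam a iota delta)
  * rprod r (fun j => (1 + u j) * (u j - 1)).
Proof. unfold Phi, Psi. rewrite spoly_r, rprod_mul. unfold one_plus_prod, zshift. ring. Qed.

End Induction.

Theorem theorem2p1 (r : nat) (a b iota : R) :
  (1 <= r)%nat -> 0 < a -> 0 < b -> 0 < iota ->
  forall delta : R, forall t : pt, regular r t ->
    prod_ops r r a b iota (delta + rho r a b iota 0) (f_can r delta) t =
    rprod r (fun j => (delta + a * INR j) * (1 - delta - iota - a * INR (r - 1 - j)))
      * f_can r (delta - 2) t.
Proof.
  intros _ _ _ _ delta t Rt.
  rewrite (prod_ops_f_can r a b iota delta r (le_n r) t Rt). unfold f_can_times. rewrite Phi_r.
  rewrite (rprod_mul r (fun j => delta + a * INR j)).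
  rewrite (rprod_ext r (fun j => 1 - delta - iota - a * INR (r - 1 - j))
                       (fun j => - lam a iota delta (r - 1 - j))) by (intros; unfold lam; ring).
  rewrite (rprod_rev r (fun j => - lam a iota delta j)).
  assert (Hcosh : f_can r delta t * rprod r (fun j => (1 + tanhv t j) * (tanhv t j - 1))
                  = rprod r (fun j => - Rpower (cosh (t j)) (delta - 2))).
  { unfold f_can. rewrite <- rprod_mul. apply rprod_ext; intros. apply Rpower_cosh_tanh. }
  assert (Hsign : rprod r (lam a iota delta) * rprod r (fun j => - Rpower (cosh (t j)) (delta - 2))
                  = rprod r (fun j => - lam a iota delta j) * f_can r (delta - 2) t).
  { unfold f_can. rewrite <- !rprod_mul. apply rprod_ext; intros; ring. }
  transitivity (rprod r (fun j => delta + a * INR j)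
                * (rprod r (lam a iota delta)
                   * (f_can r delta t * rprod r (fun j => (1 + tanhv t j) * (tanhv t j - 1))))).
  - ring.
  - rewrite Hcosh, Hsign. ring.
Qed.
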